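(* Every strong Euler–Gauss sequence is a Gauss sequence.
   Context: $\mu$ is the Möbius function. For an integer sequence $(a_n)$ and $n\ge1$, $A_n^+=\prod_{d\mid n,\ \mu(d)=1} a_{n/d}$ and $A_n^-=\prod_{d\mid n,\ \mu(d)=-1} a_{n/d}$ (empty products equal $1$). An integer sequence is a strong Euler–Gauss sequence if for all $n\ge1$, $\left(\frac{A_n^-}{\gcd(A_n^+,A_n^-)}\right)^{-1}\equiv\left(\frac{A_n^+}{\gcd(A_n^+,A_n^-)}\right)^{-1}\pmod n$, where $x^{-1}$ denotes the inverse of $x$ modulo $n$ (so the two quotients are required to be invertible modulo $n$). A Gauss sequence is an integer sequence with $\sum_{d\mid n}\mu(d)a_{n/d}\equiv0\pmod n$ for all $n\ge1$. *)

From mathcomp Require Import all_boot all_order all_algebra.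
Set Implicit Arguments. Unset Strict Implicit. Unset Printing Implicit Defensive.
Import Order.TTheory GRing.Theory Num.Theory.
Local Open Scope ring_scope.

Definition squarefree (n : nat) : bool :=
  (0 < n)%N && all (fun p => logn p n == 1)%N (primes n).

(* Moebius function mu : nat -> int (mu 0 = 0 by convention; never used). *)
Definition mobius (n : nat) : int :=
  if squarefree n then (-1) ^+ size (primes n) else 0.

Definition Aplus (a : nat -> int) (n : nat) : int :=
  \prod_(d <- divisors n | mobius d == 1) a (n %/ d)%N.
Definition Aminus (a : nat -> int) (n : nat) : int :=
  \prod_(d <- divisors n | mobius d == -1) a (n %/ d)%N.

Definition inv_congr (n : nat) (x y : int) : Prop :=
  exists u v : int,
    (x * u == 1 %[mod n%:Z])%Z /\ (y * v == 1 %[mod n%:Z])%Z /\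
    (u == v %[mod n%:Z])%Z.

Definition strong_euler_gauss (a : nat -> int) : Prop :=
  forall n : nat, (0 < n)%N ->
    let g := gcdz (Aplus a n) (Aminus a n) in
    inv_congr n ((Aminus a n) %/ g)%Z ((Aplus a n) %/ g)%Z.

Definition gauss_seq (a : nat -> int) : Prop :=
  forall n : nat, (0 < n)%N ->
    (\sum_(d <- divisors n) mobius d * a (n %/ d)%N == 0 %[mod n%:Z])%Z.

(* Write n = m p^(k+1) with p prime to m.  The squarefree divisors of n are
   the e and p e with e | m squarefree, so the Gauss sum of n is
   sum_(e | m) mu(e) (a(m/e p^(k+1)) - a(m/e p^k)), and it suffices to show
   a(m p^(k+1)) = a(m p^k) mod p^(k+1).  This goes by strong induction on m:
   the strong Euler-Gauss condition at n says A_n^+ and A_n^- agree modulo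
   p^(k+1) up to a p-adic unit; A_n^+ = a(m p^(k+1)) X and A_n^- = a(m p^k) Y,
   where X and Y are made of the pairs a(m/e p^(k+1)), a(m/e p^k) with e > 1
   related by induction.  No a(j) vanishes (else A_(2j)^- = 0 would not be
   invertible), so X can be cancelled against Y p-adically. *)

From mathcomp Require Import all_boot all_order all_algebra.
From mathcomp Require Import ring.
Set Implicit Arguments. Unset Strict Implicit. Unset Printing Implicit Defensive.
Import Order.TTheory GRing.Theory Num.Theory.
Local Open Scope ring_scope.

Lemma mobius1 : mobius 1 = 1.
Proof. by []. Qed.

Lemma mobius_primeM p e : prime p -> (0 < e)%N ->
  mobius (p * e) = if (p %| e)%N then 0 else - mobius e.
Proof.
move=> pp e0; have p0 := prime_gt0 pp.
have logn_pe : logn p (p * e) = (logn p e).+1 by rewrite lognM // logn_prime // eqxx.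
have p_pe : p \in primes (p * e) by rewrite mem_primes pp muln_gt0 p0 e0 dvdn_mulr.
case: ifP => pe.
  rewrite /mobius /squarefree; case: andP => // -[_ /allP/(_ p p_pe)].
  by rewrite logn_pe eqSS -leqn0 leqNgt logn_gt0 mem_primes pp e0 pe.
have p'e : p \notin primes e by rewrite mem_primes pp e0 pe.
have primes_pe : perm_eq (primes (p * e)) (p :: primes e).
  apply: uniq_perm; rewrite /= ?p'e ?primes_uniq // => q.
  by rewrite primesM // primes_prime // inE.
rewrite /mobius (perm_size primes_pe).
have -> : squarefree (p * e) = squarefree e.
  rewrite /squarefree muln_gt0 p0 e0 (perm_all _ primes_pe) /= logn_pe.
  have -> : logn p e = 0%N by apply/eqP; rewrite -leqn0 leqNgt logn_gt0.
  apply: eq_in_all => q qe; rewrite lognM // logn_prime //.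
  by have [qp|_] := eqVneq q p; [rewrite qp (negPf p'e) in qe | rewrite add0n].
by case: squarefree; rewrite /= ?exprS ?mulN1r ?oppr0.
Qed.

Lemma mobius_prime_divisorM p m e : prime p -> (0 < m)%N -> coprime p m ->
  e \in divisors m -> mobius (p * e) = - mobius e.
Proof.
move=> pp m0 pm; rewrite -dvdn_divisors // => em.
rewrite mobius_primeM ?(dvdn_gt0 m0 em) //; case: ifP => // pe.
by rewrite prime_coprime // (dvdn_trans pe em) in pm.
Qed.

Lemma perm_divisors_mulpX p k m (P : pred int) :
    prime p -> (0 < m)%N -> coprime p m -> ~~ P 0 ->
  perm_eq [seq d <- divisors (m * p ^ k.+1)%N | P (mobius d)]
          ([seq e <- divisors m | P (mobius e)] ++
           [seq p * e | e <- divisors m & P (- mobius e)])%N.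
Proof.
move=> pp m0 pm P0; have p0 := prime_gt0 pp.
have n0 : (0 < m * p ^ k.+1)%N by rewrite muln_gt0 m0 expn_gt0 p0.
have p'm : ~~ (p %| m)%N by rewrite -prime_coprime.
have mulpI : injective (muln p) by move=> x y /eqP; rewrite eqn_pmul2l // => /eqP.
apply: uniq_perm.
- by rewrite filter_uniq ?divisors_uniq.
- rewrite cat_uniq map_inj_uniq // !filter_uniq ?divisors_uniq //= andbT.
  apply/hasPn => _ /mapP[e _ ->]; rewrite mem_filter -dvdn_divisors //.
  by apply: contraNN p'm => /andP[_ /(dvdn_trans (dvdn_mulr e (dvdnn p)))].
move=> x; rewrite mem_cat !mem_filter -!dvdn_divisors //.
have [/dvdnP[e ->]|p'x] := boolP (p %| x)%N; rewrite ?[(e * p)%N]mulnC.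
  rewrite mem_map // mem_filter -dvdn_divisors // [(p * e %| m)%N]negbTE ?andbF /=; last first.
    by apply: contraNN p'm; apply/dvdn_trans/dvdn_mulr.
  have [->|e0] := posnP e; first by rewrite muln0 dvd0n (negPf P0) gtn_eqF.
  rewrite mobius_primeM //; case: ifP => pe.
    rewrite (negPf P0) /=; apply/esym/negbTE.
    by apply/negP => /andP[_ em]; rewrite (dvdn_trans pe em) in p'm.
  rewrite expnS mulnCA dvdn_pmul2l // Gauss_dvdl //.
  by rewrite coprimeXr // coprime_sym prime_coprime ?pe.
have -> : (x \in [seq p * e | e <- divisors m & P (- mobius e)])%N = false.
  by apply/negbTE/mapP => -[e _ xE]; rewrite xE dvdn_mulr in p'x.
rewrite orbF Gauss_dvdl // coprimeXr // coprime_sym prime_coprime //.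
Qed.

Lemma big_mobius_divisors_mulpX (R : Type) (idx : R) (op : Monoid.com_law idx)
    p k m (P : pred int) (F : nat -> R) :
    prime p -> (0 < m)%N -> coprime p m -> ~~ P 0 ->
  \big[op/idx]_(d <- divisors (m * p ^ k.+1)%N | P (mobius d)) F d =
  op (\big[op/idx]_(e <- divisors m | P (mobius e)) F e)
     (\big[op/idx]_(e <- divisors m | P (- mobius e)) F (p * e)%N).
Proof.
move=> pp m0 pm P0.
by rewrite -big_filter (perm_big _ (perm_divisors_mulpX k pp m0 pm P0)) big_cat big_map !big_filter.
Qed.

Lemma sum_mobius_divisors_mulpX p k m (F : nat -> int) :
    prime p -> (0 < m)%N -> coprime p m ->
  \sum_(d <- divisors (m * p ^ k.+1)%N) mobius d * F d =
  \sum_(e <- divisors m) mobius e * (F e - F (p * e)%N).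
Proof.
move=> pp m0 pm.
rewrite -(big_rmcond _ _ (P := fun d => mobius d != 0)) => [|d /negPn/eqP->];
  last by rewrite mul0r.
rewrite (big_mobius_divisors_mulpX _ _ (P := fun z : int => z != 0)) //=.
under [X in _ + X]eq_bigl do rewrite oppr_eq0.
rewrite -big_split /= big_rmcond_in => [|e em]; last first.
  by rewrite (mobius_prime_divisorM pp m0 pm em) => /negPn/eqP->; rewrite oppr0 !mul0r addr0.
apply: eq_big_seq => e em.
by rewrite (mobius_prime_divisorM pp m0 pm em) mulNr mulrBr.
Qed.

Lemma divn_mul_expS p k m e : (0 < p)%N -> (e %| m)%N ->
  ((m * p ^ k.+1) %/ (p * e) = m %/ e * p ^ k)%N.
Proof. by move=> p0 em; rewrite expnS mulnCA divnMl // divn_mulAC. Qed.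

Lemma prod_mobius_divisors_mulpX p k m (s : int) (F : nat -> int) :
    prime p -> (0 < m)%N -> coprime p m -> s != 0 ->
  \prod_(d <- divisors (m * p ^ k.+1)%N | mobius d == s) F ((m * p ^ k.+1) %/ d)%N =
  \prod_(e <- divisors m | mobius e == s) F (m %/ e * p ^ k.+1)%N *
  \prod_(e <- divisors m | mobius e == - s) F (m %/ e * p ^ k)%N.
Proof.
move=> pp m0 pm s0; have p0 := prime_gt0 pp.
rewrite (big_mobius_divisors_mulpX _ _ (P := fun z => z == s)) ?(eq_sym 0) //.
rewrite /=; congr (_ * _); rewrite big_seq_cond [RHS]big_seq_cond.
  apply: eq_bigr => e /andP[]; rewrite -dvdn_divisors // => em _.
  by rewrite divn_mulAC.
apply: eq_big => [e|e /andP[]]; first by rewrite eqr_oppLR.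
rewrite -dvdn_divisors // => em _.
by rewrite divn_mul_expS.
Qed.

(* Congruence modulo q in the localisation of Z at the integers prime to q:
   x * d = y * d' with d, d' prime to q and d' = d (mod q).  Unlike plain
   congruence it allows the cancellation of nonzero related factors. *)
Definition loc_eqmod (q x y : int) : Prop :=
  exists c d : int, coprimez d q /\ x * d = y * (d + q * c).

Section LocEqmod.

Variable q : int.

Lemma coprimez_addMr d c : coprimez (d + q * c) q = coprimez d q.
Proof. by rewrite /coprimez gcdzC addrC mulrC gcdzMDl gcdzC. Qed.

Lemma loc_eqmod_refl x : loc_eqmod q x x.
Proof. by exists 0, 1; rewrite /coprimez gcd1z mulr0 addr0. Qed.

Lemma loc_eqmod_sym x y : loc_eqmod q x y -> loc_eqmod q y x.
Proof.
case=> c [d [dq xy]]; exists (- c), (d + q * c); rewrite coprimez_addMr.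
by split=> //; rewrite -xy; ring.
Qed.

Lemma loc_eqmod_mul x y x' y' :
  loc_eqmod q x y -> loc_eqmod q x' y' -> loc_eqmod q (x * x') (y * y').
Proof.
case=> c [d [dq xy]] [c' [d' [dq' xy']]].
exists (c * d' + c' * d + q * c * c'), (d * d'); rewrite coprimezMl dq dq'.
split=> //; transitivity ((x * d) * (x' * d')); first ring.
by rewrite xy xy'; ring.
Qed.

Lemma loc_eqmod_prod (I : eqType) (r : seq I) (P : pred I) (F G : I -> int) :
    (forall i, i \in r -> P i -> loc_eqmod q (F i) (G i)) ->
  loc_eqmod q (\prod_(i <- r | P i) F i) (\prod_(i <- r | P i) G i).
Proof.
move=> FG; rewrite big_seq_cond [X in loc_eqmod _ _ X]big_seq_cond.
apply: (big_ind2 (loc_eqmod q)); first exact: loc_eqmod_refl.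
  exact: loc_eqmod_mul.
by move=> i /andP[]; apply: FG.
Qed.

Lemma loc_eqmod_cancelr x y z w : w != 0 ->
  loc_eqmod q (x * z) (y * w) -> loc_eqmod q z w -> loc_eqmod q x y.
Proof.
move=> w0 [c' [d' [dq' e']]] [c [d [dq e]]].
exists (d * c' - c * d'), ((d + q * c) * d'); rewrite coprimezMl coprimez_addMr dq dq'.
split=> //; apply: (mulfI w0).
transitivity (x * d' * (w * (d + q * c))); first ring.
rewrite -e; transitivity (d * (x * z * d')); first ring.
by rewrite e'; ring.
Qed.

Lemma loc_eqmod_dvd x y : loc_eqmod q x y -> (q %| x - y)%Z.
Proof.
case=> c [d [dq xy]]; have qd : coprimez q d by rewrite coprimez_sym.
by rewrite -(Gauss_dvdzl _ qd) mulrBl xy; apply/dvdzP; exists (y * c); ring.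
Qed.

Lemma loc_eqmod_mulr_of_dvd x y g : coprimez x q -> (q %| y - x)%Z ->
  loc_eqmod q (y * g) (x * g).
Proof.
move=> xq /dvdzP[c yx]; exists c, x; split=> //.
have -> : y = x + c * q by rewrite -yx; ring.
ring.
Qed.

End LocEqmod.

Lemma inv_congr_dvd n x y : inv_congr n x y -> (n%:Z %| x - y)%Z.
Proof.
rewrite /inv_congr => -[u [v [xu [yv uv]]]]; move: xu yv uv; rewrite !eqz_mod_dvd => xu yv uv.
have -> : x - y = y * (x * u - 1) - x * (y * v - 1) - x * y * (u - v) by ring.
by apply: rpredB; [apply: rpredB|]; apply: dvdz_mull.
Qed.

Lemma inv_congr_coprimez n x y : inv_congr n x y -> coprimez x n%:Z.
Proof.
rewrite /inv_congr => -[u [_ [xu _]]]; apply/coprimezP.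
move: xu; rewrite eqz_mod_dvd => /dvdzP[t xu].
by exists (u, - t) => /=; rewrite mulNr -xu; ring.
Qed.

Section StrongEulerGauss.

Variable a : nat -> int.
Hypothesis seg : strong_euler_gauss a.

Lemma strong_euler_gauss_loc_eqmod n q : (0 < n)%N -> (q %| n%:Z)%Z ->
  loc_eqmod q (Aplus a n) (Aminus a n).
Proof.
move=> n0 qn; have := seg n0; set g := gcdz _ _.
set x := (Aminus a n %/ g)%Z; set y := (Aplus a n %/ g)%Z => xy.
have -> : Aplus a n = y * g by rewrite divzK ?dvdz_gcdl.
have -> : Aminus a n = x * g by rewrite divzK ?dvdz_gcdr.
apply: loc_eqmod_mulr_of_dvd; first exact: coprimez_dvdr qn (inv_congr_coprimez xy).
by apply: dvdz_trans qn _; rewrite -opprB rpredN inv_congr_dvd.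
Qed.

Lemma strong_euler_gauss_neq0 m : (0 < m)%N -> a m != 0.
Proof.
move=> m0; apply/eqP => am0; have m2_0 : (0 < 2 * m)%N by rewrite muln_gt0.
have Aminus0 : Aminus a (2 * m) = 0.
  apply/eqP; rewrite prodf_seq_eq0; apply/hasP; exists 2%N.
    by rewrite -dvdn_divisors // dvdn_mulr.
  by rewrite mulKn // am0 eqxx.
have := inv_congr_coprimez (seg m2_0); rewrite Aminus0 div0z /coprimez gcd0z.
by rewrite /= -(prednK m0) mulnS.
Qed.

Lemma strong_euler_gauss_loc_eqmod_expS p k m : prime p -> (0 < m)%N -> coprime p m ->
  loc_eqmod (p ^ k.+1)%:Z (a (m * p ^ k.+1)%N) (a (m * p ^ k)%N).
Proof.
move=> pp; elim/ltn_ind: m => m IH m0 pm.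
have proper_divisor e : e \in rem 1%N (divisors m) ->
    [/\ (m %/ e < m)%N, (0 < m %/ e)%N & coprime p (m %/ e)].
  rewrite (mem_rem_uniq _ (divisors_uniq m)) inE -dvdn_divisors // => /andP[e1 em].
  have e0 := dvdn_gt0 m0 em.
  split; last exact: coprime_dvdr (dvdn_div em) pm.
    by rewrite ltn_Pdiv // ltn_neqAle eq_sym e1.
  by rewrite divn_gt0 // dvdn_leq.
have n0 : (0 < m * p ^ k.+1)%N by rewrite muln_gt0 m0 expn_gt0 prime_gt0.
have qn : ((p ^ k.+1)%:Z %| (m * p ^ k.+1)%N%:Z)%Z by rewrite dvdzE dvdn_mull.
have := strong_euler_gauss_loc_eqmod n0 qn.
rewrite /Aplus /Aminus !prod_mobius_divisors_mulpX // opprK.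
rewrite !(big_rem _ (divisor1 m)) mobius1 /= divn1 !mul1r.
set X1 := \prod_(_ <- _ | _ == 1) a (_ * p ^ k.+1)%N.
set X2 := \prod_(_ <- _ | _ == -1) a (_ * p ^ k)%N.
set Y1 := \prod_(_ <- _ | _ == -1) a (_ * p ^ k.+1)%N.
set Y2 := \prod_(_ <- _ | _ == 1) a (_ * p ^ k)%N.
rewrite -mulrA [X in loc_eqmod _ _ X]mulrCA [Y1 * Y2]mulrC => Apm.
apply: (loc_eqmod_cancelr _ Apm).
  rewrite mulf_neq0 // prodf_seq_neq0; apply/allP => e /proper_divisor[_ e0 _];
    by rewrite strong_euler_gauss_neq0 ?implybT // muln_gt0 e0 expn_gt0 prime_gt0.
apply: loc_eqmod_mul; apply: loc_eqmod_prod => e /proper_divisor[lt_em e_gt0 pe] _.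
  exact: IH.
by apply: loc_eqmod_sym; apply: IH.
Qed.

Lemma strong_euler_gauss_dvd_mobius_sum p k m : prime p -> (0 < m)%N -> coprime p m ->
  ((p ^ k.+1)%:Z %| \sum_(d <- divisors (m * p ^ k.+1)%N)
                      mobius d * a ((m * p ^ k.+1) %/ d)%N)%Z.
Proof.
move=> pp m0 pm.
rewrite (@sum_mobius_divisors_mulpX p k m (fun d => a ((m * p ^ k.+1) %/ d)%N)) // big_seq.
apply: rpred_sum => e; rewrite -dvdn_divisors // => em; apply: dvdz_mull.
rewrite -divn_mulAC // divn_mul_expS ?prime_gt0 //; apply/loc_eqmod_dvd.
apply: strong_euler_gauss_loc_eqmod_expS => //; last exact: coprime_dvdr (dvdn_div em) pm.
by rewrite divn_gt0 ?(dvdn_gt0 m0 em) // dvdn_leq.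
Qed.

End StrongEulerGauss.

Theorem theorem2 (a : nat -> int) : strong_euler_gauss a -> gauss_seq a.
Proof.
move=> seg n n0; rewrite eqz_mod_dvd subr0 dvdzE.
apply/dvdn_partP => // p; rewrite mem_primes => /and3P[pp _ pn].
have [m pm n_eq] := pfactor_coprime pp n0.
have m0 : (0 < m)%N by move: n0; rewrite n_eq muln_gt0 => /andP[].
have := logn_gt0 p n; rewrite mem_primes pp n0 pn p_part.
case: (logn p n) n_eq => // k n_eq _.
by have := strong_euler_gauss_dvd_mobius_sum seg k pp m0 pm; rewrite -n_eq dvdzE.
Qed.
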